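(* Let $K$ be any complete non-Archimedean field and let $\mathbf{\Gamma}:\overline{\mathcal{O}}\to K$ be a continuous non-vanishing function. Then $H:\overline{\mathcal{O}}\to K$ is a continuous non-vanishing function satisfying, for all $n\in\mathbb{N}$ and all $\mathbf{x}\in\overline{\mathcal{O}}$ with $\varphi^{(n)}(-\mathbf{x})=-\mathbf{x}$, \[\prod_{j=0}^{n-1} \mathbf{\Gamma}\left(-\varphi^{(j)}(-\mathbf{x})\right) = \prod_{j=0}^{n-1} H\left(-\varphi^{(j)}(-\mathbf{x})\right),\] if and only if \[H(\mathbf{x})=\mathbf{\Gamma}(\mathbf{x})\cdot\frac{G(\mathbf{x})}{G\left(-\varphi(-\mathbf{x})\right)}\] for all $\mathbf{x}\in\overline{\mathcal{O}}$, where $G:\overline{\mathcal{O}}\to K$ is some (any) continuous non-vanishing function.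
   Context: Let $\overline{\mathcal{O}}$ be a direct product of finitely many rings $\overline{\mathcal{O}}_t$, where each $\overline{\mathcal{O}}_t$ is the ring of integers of some non-Archimedean local field with a fixed uniformizer. For each $t$, let $\pi_t\in\overline{\mathcal{O}}_t$ be a (positive) power of the given uniformizer and let $S_t\subseteq\overline{\mathcal{O}}_t$ be a complete set of representatives of $\overline{\mathcal{O}}_t/(\pi_t)$. For $\mathbf{x}=(\mathbf{x}_t)_t\in\overline{\mathcal{O}}$ write $\mathbf{x}_t=\sum_{i\ge0}x_{t,i}\pi_t^i$ with $x_{t,i}\in S_t$. Define $\varphi:\overline{\mathcal{O}}\to\overline{\mathcal{O}}$ by $\varphi(\mathbf{x})=(\varphi_t(\mathbf{x}_t))_t$ where $\varphi_t(\mathbf{x}_t)=\sum_{i\ge0}x_{t,i+1}\pi_t^i$ (shift of digits), and $\varphi^{(j)}$ denotes its $j$-fold iterate. *)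

From HB Require Import structures.
From mathcomp Require Import all_boot all_order all_algebra.
From mathcomp Require Import reals.
From Stdlib Require Import ClassicalEpsilon.

Set Implicit Arguments.
Unset Strict Implicit.
Unset Printing Implicit Defensive.

Import Order.TTheory GRing.Theory Num.Theory.
Local Open Scope ring_scope.

Section Defs.
Variable R : realType.

Definition nonarch_abs (K : fieldType) (abs : K -> R) : Prop :=
  (forall x, 0 <= abs x) /\
  (forall x, abs x = 0 <-> x = 0) /\
  (forall x y, abs (x * y) = abs x * abs y) /\
  (forall x y, abs (x + y) <= Num.max (abs x) (abs y)).

Definition abs_cauchy (K : fieldType) (abs : K -> R) (u : nat -> K) : Prop :=
  forall eps, 0 < eps -> exists N, forall i j, (N <= i)%N -> (N <= j)%N ->
    abs (u i - u j) < eps.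

Definition abs_converges (K : fieldType) (abs : K -> R) (u : nat -> K) : Prop :=
  exists l, forall eps, 0 < eps -> exists N, forall i, (N <= i)%N ->
    abs (u i - l) < eps.

Definition complete_nonarch_field (K : fieldType) (abs : K -> R) : Prop :=
  nonarch_abs abs /\ forall u, abs_cauchy abs u -> abs_converges abs u.

(** Non-Archimedean local field: complete, discretely (and nontrivially)
    valued, with finite residue field. *)
Definition nonarch_local_field (F : fieldType) (abs : F -> R) : Prop :=
  complete_nonarch_field abs /\
  (exists w : F, 0 < abs w < 1 /\
     forall x, x <> 0 -> exists k : int, abs x = abs w ^ k) /\
  (exists s : seq F, forall x, abs x <= 1 ->
     exists2 y, y \in s & abs (x - y) < 1).

(** A uniformizer: a generator of the maximal ideal of the ring of integers. *)
Definition uniformizer (F : fieldType) (abs : F -> R) (w : F) : Prop :=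
  0 < abs w < 1 /\ forall x, abs x < 1 -> abs x <= abs w.

(** [S] is a complete set of representatives of O/(pi), O = {abs <= 1}. *)
Definition complete_reps (F : fieldType) (abs : F -> R) (pi : F)
  (S : F -> Prop) : Prop :=
  (forall s, S s -> abs s <= 1) /\
  (forall x, abs x <= 1 -> exists s, S s /\ abs (x - s) <= abs pi /\
     forall s', S s' -> abs (x - s') <= abs pi -> s' = s).

Definition digit0 (F : fieldType) (abs : F -> R) (pi : F) (S : F -> Prop)
  (x : F) : F :=
  epsilon (inhabits 0) (fun s => S s /\ abs (x - s) <= abs pi).

(** Digit shift: if x = sum_i x_i pi^i then shift x = sum_i x_{i+1} pi^i
    = (x - x_0) / pi. *)
Definition digit_shift (F : fieldType) (abs : F -> R) (pi : F)
  (S : F -> Prop) (x : F) : F :=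
  (x - digit0 abs pi S x) / pi.

(** The product  Obar = prod_t O_t  is represented inside
    forall t, F t by the predicate [inObar]. *)
Definition inObar (m : nat) (F : 'I_m -> fieldType)
  (absF : forall t, F t -> R) (x : forall t, F t) : Prop :=
  forall t, absF t (x t) <= 1.

Definition negO (m : nat) (F : 'I_m -> fieldType) (x : forall t, F t)
  : forall t, F t := fun t => - x t.

Definition varphi (m : nat) (F : 'I_m -> fieldType)
  (absF : forall t, F t -> R) (varpi : forall t, F t) (e : 'I_m -> nat)
  (S : forall t, F t -> Prop) (x : forall t, F t) : forall t, F t :=
  fun t => digit_shift (absF t) (varpi t ^+ e t) (S t) (x t).

(** Continuity on Obar (product topology of the valuation topologies). *)
Definition contObar (m : nat) (F : 'I_m -> fieldType)
  (absF : forall t, F t -> R) (K : fieldType) (absK : K -> R)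
  (f : (forall t, F t) -> K) : Prop :=
  forall x, inObar absF x -> forall eps, 0 < eps -> exists2 delta, 0 < delta &
    forall y, inObar absF y -> (forall t, absF t (y t - x t) < delta) ->
      absK (f y - f x) < eps.

Definition nonvanishingObar (m : nat) (F : 'I_m -> fieldType)
  (absF : forall t, F t -> R) (K : fieldType) (f : (forall t, F t) -> K)
  : Prop :=
  forall x, inObar absF x -> f x <> 0.

End Defs.

(* With f z := H (- z) / Gam (- z), the hypothesis on periodic orbits says
   that the products of f along the periodic orbits of the digit shift are 1,
   and the claim is that f is then a multiplicative coboundary,
   f = Phi o shift / Phi (a Livsic theorem), with G x := 1 / Phi (- x).
   Let fixpt be the fixed point of the shift with constant digit; as
   f fixpt = 1, the product of f along the backward orbit of z that runs
   through the digits of fixpt converges in the complete field K, and this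
   is Phi z.  The identity Phi (shift y) = f y * Phi y follows by shadowing
   the backward orbits of y and shift y with periodic orbits, along which the
   product of f is 1.  The converse is a telescoping product.  All estimates
   use relative closeness |a - b| <= eps |b|, which the ultrametric inequality
   makes transitive and compatible with products and inverses without any
   loss in eps. *)

From HB Require Import structures.
From mathcomp Require Import all_boot all_order all_algebra.
From mathcomp Require Import reals ring lra.
From Stdlib Require Import ClassicalEpsilon FunctionalExtensionality.

Set Implicit Arguments.
Unset Strict Implicit.
Unset Printing Implicit Defensive.

Import Order.TTheory GRing.Theory Num.Theory.
Local Open Scope ring_scope.

Lemma bernoulli_ineq (R : realDomainType) (b : R) n :
  0 <= b -> 1 + n%:R * b <= (1 + b) ^+ n.
Proof.
move=> b_ge0; elim: n => [|n IHn]; first by rewrite expr0 mul0r addr0.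
have Xn_ge0 : 0 <= (1 + b) ^+ n by apply: exprn_ge0; lra.
have nb_ge0 : 0 <= n%:R * b :> R by apply: mulr_ge0.
rewrite exprS -natr1; nra.
Qed.

Lemma exprn_eventually_lt (R : archiRealFieldType) (a d : R) :
  0 <= a -> a < 1 -> 0 < d -> exists N, forall n, (N <= n)%N -> a ^+ n < d.
Proof.
move=> a_ge0 a_lt1 d_gt0.
suff [N aN_lt] : exists N, a ^+ N < d.
  exists N => n leNn; apply: le_lt_trans aN_lt.
  by apply: ler_wiXn2l => //; exact: ltW.
have [->|a_neq0] := eqVneq a 0; first by exists 1%N; rewrite expr1.
have a_gt0 : 0 < a by rewrite lt_def a_neq0.
pose b := a^-1 - 1.
have b_gt0 : 0 < b by rewrite /b subr_gt0 invf_gt1.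
have /archi_boundP : 0 <= (d * b)^-1 by rewrite invr_ge0 mulr_ge0 // ltW.
set N := Num.Def.archi_bound _ => ltN.
exists N; rewrite -[a]invrK -[a^-1](subrK 1) -/b addrC exprVn.
have Xn_gt0 : 0 < (1 + b) ^+ N by apply: exprn_gt0; lra.
rewrite -(ltr_pM2r Xn_gt0) mulVf ?gt_eqF //.
have db_gt0 : 0 < d * b by rewrite mulr_gt0.
have : 1 < N%:R * (d * b) by rewrite -ltr_pdivrMr // div1r.
have := bernoulli_ineq N (ltW b_gt0); nra.
Qed.

Lemma prod_cyclic_shift (R : comPzSemiRingType) n (g : nat -> R) :
  g n = g 0%N -> \prod_(j < n) g j.+1 = \prod_(j < n) g j.
Proof.
case: n => [|n] gn; first by rewrite !big_ord0.
by rewrite big_ord_recr big_ord_recl /= gn mulrC.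
Qed.

Section NonArchimedean.
Variables (R : realType) (K : fieldType) (abs : K -> R).
Hypothesis habs : nonarch_abs abs.

Lemma abs_ge0 x : 0 <= abs x. Proof. by case: habs. Qed.
Lemma abs_eq0 x : abs x = 0 <-> x = 0. Proof. by case: habs => _ []. Qed.
Lemma absM x y : abs (x * y) = abs x * abs y. Proof. by case: habs => _ [_ []]. Qed.
Lemma abs_ultra x y : abs (x + y) <= Num.max (abs x) (abs y).
Proof. by case: habs => _ [_ [_]]. Qed.

Lemma abs0 : abs 0 = 0. Proof. exact/abs_eq0. Qed.

Lemma abs_gt0 x : x != 0 -> 0 < abs x.
Proof. by move=> x_neq0; rewrite lt_def abs_ge0 andbT; apply: contra_neq x_neq0 => /abs_eq0. Qed.

Lemma abs1 : abs 1 = 1.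
Proof.
have abs1_neq0 : abs 1 != 0 by rewrite gt_eqF // abs_gt0 ?oner_neq0.
by apply: (mulIf abs1_neq0); rewrite -absM !mul1r.
Qed.

Lemma absN x : abs (- x) = abs x.
Proof.
have absN1_sqr : abs (-1) * abs (-1) = 1 by rewrite -absM mulrNN mulr1 abs1.
have absN1 : abs (-1) = 1 by have := abs_ge0 (-1); nra.
by rewrite -mulN1r absM absN1 mul1r.
Qed.

Lemma absB x y : abs (x - y) = abs (y - x).
Proof. by rewrite -absN opprB. Qed.

Lemma absV x : abs x^-1 = (abs x)^-1.
Proof.
have [->|x_neq0] := eqVneq x 0; first by rewrite invr0 abs0 invr0.
apply: (mulIf (lt0r_neq0 (abs_gt0 x_neq0))).
by rewrite -absM mulVf // abs1 mulVf // gt_eqF // abs_gt0.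
Qed.

Lemma absX x n : abs (x ^+ n) = abs x ^+ n.
Proof. by elim: n => [|n IHn]; rewrite ?abs1 // !exprS absM IHn. Qed.

Lemma abs_le_add x y c : abs x <= c -> abs y <= c -> abs (x + y) <= c.
Proof. by move=> xc yc; apply: le_trans (abs_ultra x y) _; rewrite ge_max xc yc. Qed.

Lemma abs_le_sub x y c : abs x <= c -> abs y <= c -> abs (x - y) <= c.
Proof. by move=> xc yc; apply: abs_le_add; rewrite ?absN. Qed.

Lemma abs_eq_of_lt x y : abs (x - y) < abs y -> abs x = abs y.
Proof.
move=> lt_xy; apply/eqP; rewrite eq_le.
have -> /= : abs x <= abs y by rewrite -(subrK y x) abs_le_add // ltW.
have := abs_ultra (y - x) x; rewrite subrK le_max absB.
by case/orP=> // /(lt_le_trans lt_xy); rewrite ltxx.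
Qed.

Lemma abs_1sub x : abs x < 1 -> abs (1 - x) = 1.
Proof.
by move=> x_lt1; rewrite -abs1; apply: abs_eq_of_lt; rewrite addrAC subrr add0r absN abs1.
Qed.

Definition approx (eps : R) (a b : K) := abs (a - b) <= eps * abs b.

Section Approx.
Variable eps : R.
Hypotheses (eps_ge0 : 0 <= eps) (eps_lt1 : eps < 1).

Lemma approx_abs a b : approx eps a b -> abs a = abs b.
Proof.
rewrite /approx => ab; have [b0|b_neq0] := eqVneq b 0.
  by move: ab; rewrite b0 subr0 abs0 mulr0 => a_le0; apply/eqP; rewrite eq_le a_le0 abs_ge0.
by apply: abs_eq_of_lt; apply: le_lt_trans ab _; rewrite gtr_pMl ?abs_gt0.
Qed.

Lemma approx_neq0 a b : approx eps a b -> b != 0 -> a != 0.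
Proof. by move=> /approx_abs ab; apply: contra_neq => a0; apply/abs_eq0; rewrite -ab a0 abs0. Qed.

Lemma approx_refl a : approx eps a a.
Proof. by rewrite /approx subrr abs0 mulr_ge0 // abs_ge0. Qed.

Lemma approx_sym a b : approx eps a b -> approx eps b a.
Proof. by move=> ab; rewrite /approx absB (approx_abs ab). Qed.

Lemma approx_trans a b c : approx eps a b -> approx eps b c -> approx eps a c.
Proof.
move=> ab bc; rewrite /approx -(subrK b a) -addrA.
by apply: abs_le_add => //; rewrite -(approx_abs bc).
Qed.

Lemma approxM a b c d : approx eps a b -> approx eps c d -> approx eps (a * c) (b * d).
Proof.
move=> ab cd; rewrite /approx.
have -> : a * c - b * d = a * (c - d) + (a - b) * d by ring.
have b_ge0 := abs_ge0 b; have d_ge0 := abs_ge0 d.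
by apply: abs_le_add; rewrite !absM ?(approx_abs ab); move: ab cd; rewrite /approx; nra.
Qed.

Lemma approxV a b : approx eps a b -> approx eps a^-1 b^-1.
Proof.
move=> ab; have [b0|b_neq0] := eqVneq b 0.
  have /abs_eq0 -> : abs a = 0 by rewrite (approx_abs ab) b0 abs0.
  by rewrite b0; apply: approx_refl.
have a_neq0 : a != 0 by apply: approx_neq0 ab b_neq0.
rewrite /approx; have -> : a^-1 - b^-1 = (b - a) / (a * b) by field; rewrite a_neq0 b_neq0.
rewrite absM absV absM absB (approx_abs ab) absV.
have b_gt0 := abs_gt0 b_neq0.
by rewrite ler_pdivrMr ?mulr_gt0 // mulrA mulfVK ?gt_eqF.
Qed.

End Approx.

Lemma approx_eq a b : (forall eps, 0 < eps -> eps < 1 -> approx eps a b) -> a = b.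
Proof.
move=> ab; apply/eqP; rewrite -subr_eq0; apply/eqP/abs_eq0.
apply/eqP; rewrite eq_le abs_ge0 andbT.
have [b0|b_neq0] := eqVneq b 0.
  by have := ab (1/2) ltac:(lra) ltac:(lra); rewrite /approx b0 abs0 mulr0.
rewrite leNgt; apply/negP => d_gt0.
have b_gt0 := abs_gt0 b_neq0.
pose eps := Num.min (1/2) (abs (a - b) / (2 * abs b)).
have eps_gt0 : 0 < eps.
  by rewrite lt_min; apply/andP; split; [lra | rewrite divr_gt0 ?mulr_gt0].
have eps_lt1 : eps < 1 by rewrite gt_min; apply/orP; left; lra.
have eps_le : eps * abs b <= abs (a - b) / 2.
  have : eps <= abs (a - b) / (2 * abs b) by rewrite ge_min lexx orbT.
  rewrite ler_pdivlMr ?mulr_gt0 //; lra.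
have := ab eps eps_gt0 eps_lt1; rewrite /approx; lra.
Qed.

Definition abs_lim (u : nat -> K) : K := epsilon (inhabits 0) (fun l =>
  forall eps, 0 < eps -> exists N, forall i, (N <= i)%N -> abs (u i - l) < eps).

Lemma approx_abs_lim u : (forall u, abs_cauchy abs u -> abs_converges abs u) ->
  (forall i, u i != 0) ->
  (forall eps, 0 < eps -> eps < 1 -> exists N, forall i j, (N <= i)%N -> (N <= j)%N ->
     approx eps (u i) (u j)) ->
  forall eps, 0 < eps -> eps < 1 -> exists N, forall i, (N <= i)%N -> approx eps (abs_lim u) (u i).
Proof.
move=> abs_complete u_neq0 u_cauchy eps eps_gt0 eps_lt1.
have [N1 hN1] := u_cauchy (1/2) ltac:(lra) ltac:(lra).
pose c := abs (u N1); have c_gt0 : 0 < c by exact: abs_gt0.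
have abs_u i : (N1 <= i)%N -> abs (u i) = c.
  by move=> le_N1i; apply: (approx_abs (eps := 1/2)) => //; [lra | exact: hN1].
have : abs_converges abs u.
  apply: abs_complete => e e_gt0.
  pose e' := Num.min (1/2) (e / (2 * c)).
  have e'_gt0 : 0 < e' by rewrite lt_min; apply/andP; split; [lra | rewrite divr_gt0 ?mulr_gt0].
  have e'_lt1 : e' < 1 by rewrite gt_min; apply/orP; left; lra.
  have e'c_lt : e' * c < e.
    have : e' <= e / (2 * c) by rewrite ge_min lexx orbT.
    by rewrite ler_pdivlMr ?mulr_gt0 //; lra.
  have [N2 hN2] := u_cauchy e' e'_gt0 e'_lt1.
  exists (maxn N1 N2) => i j; rewrite !geq_max => /andP[le_N1i le_N2i] /andP[le_N1j le_N2j].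
  by apply: le_lt_trans e'c_lt; rewrite -(abs_u j le_N1j); exact: hN2.
move=> /(epsilon_spec (inhabits 0)); rewrite -/(abs_lim u) => lim_u.
have [N3 hN3] := lim_u (eps * c) (mulr_gt0 eps_gt0 c_gt0).
exists (maxn N1 N3) => i; rewrite geq_max => /andP[le_N1i le_N3i].
by rewrite /approx absB (abs_u i le_N1i) ltW // hN3.
Qed.

End NonArchimedean.

Section Digits.
Variables (R : realType) (F : fieldType) (abs : F -> R) (pi : F) (S : F -> Prop).
Hypothesis habs : nonarch_abs abs.
Hypotheses (pi_gt0 : 0 < abs pi) (pi_lt1 : abs pi < 1).
Hypothesis hS : complete_reps abs pi S.

Local Notation digit0 := (digit0 abs pi S).
Local Notation digit_shift := (digit_shift abs pi S).

Lemma pi_neq0 : pi != 0.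
Proof. by apply: contraTneq pi_gt0 => ->; rewrite abs0 // ltxx. Qed.

Lemma reps_le1 s : S s -> abs s <= 1.
Proof. by case: hS => + _; apply. Qed.

Lemma reps_uniq x s s' : abs x <= 1 ->
  S s -> abs (x - s) <= abs pi -> S s' -> abs (x - s') <= abs pi -> s = s'.
Proof.
move=> x_le1 Ss xs Ss' xs'; case: hS => _ /(_ x x_le1) [u [_ [_ u_uniq]]].
by rewrite (u_uniq s Ss xs) (u_uniq s' Ss' xs').
Qed.

Lemma digit0P x : abs x <= 1 -> S (digit0 x) /\ abs (x - digit0 x) <= abs pi.
Proof.
move=> x_le1; apply: (epsilon_spec (inhabits 0) (fun s => S s /\ abs (x - s) <= abs pi)).
by case: hS => _ /(_ x x_le1) [s [Ss [xs _]]]; exists s.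
Qed.

Lemma digit_expansion x : x = digit0 x + pi * digit_shift x.
Proof. by rewrite /digit_shift mulrC mulfVK ?pi_neq0 // addrC subrK. Qed.

Lemma digit0_expansion s z : S s -> abs z <= 1 -> digit0 (s + pi * z) = s.
Proof.
move=> Ss z_le1.
have pi_z : abs (pi * z) <= abs pi.
  by rewrite absM // ler_piMr // ltW.
have x_le1 : abs (s + pi * z) <= 1.
  by apply: abs_le_add => //; [exact: reps_le1 | exact: le_trans pi_z (ltW pi_lt1)].
have [Sd xd] := digit0P x_le1.
by apply: reps_uniq x_le1 Sd xd Ss _; rewrite addrAC subrr add0r.
Qed.

Lemma digit_shift_expansion s z : S s -> abs z <= 1 -> digit_shift (s + pi * z) = z.
Proof.
move=> Ss z_le1; rewrite /digit_shift digit0_expansion //.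
by rewrite addrAC subrr add0r mulrC mulKf ?pi_neq0.
Qed.

Lemma digit_shift_le1 x : abs x <= 1 -> abs (digit_shift x) <= 1.
Proof.
by move=> /digit0P [_ xd]; rewrite /digit_shift absM // absV // ler_pdivrMr // mul1r.
Qed.

Lemma digit_shift_contract x y n : abs x <= 1 -> abs y <= 1 ->
  abs (x - y) <= abs pi ^+ n.+1 -> abs (digit_shift x - digit_shift y) <= abs pi ^+ n.
Proof.
move=> x_le1 y_le1 xy.
have [Sdx xdx] := digit0P x_le1; have [Sdy ydy] := digit0P y_le1.
have pin_le : abs pi ^+ n.+1 <= abs pi.
  by rewrite exprS ler_piMr ?exprn_ile1 // ltW.
have ydx : abs (y - digit0 x) <= abs pi.
  rewrite -(subrK x y) -addrA; apply: abs_le_add => //.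
  by rewrite absB //; exact: le_trans xy pin_le.
have dxy : digit0 x = digit0 y by apply: reps_uniq y_le1 Sdx ydx Sdy ydy.
rewrite /digit_shift dxy -mulrBl opprB addrA subrK.
by rewrite absM // absV // ler_pdivrMr // -exprSr.
Qed.

End Digits.

Section DigitShift.
Variables (R : realType) (m : nat) (F : 'I_m -> fieldType) (absF : forall t, F t -> R).
Variables (pi : forall t, F t) (S : forall t, F t -> Prop).
Arguments absF : clear implicits.
Arguments S : clear implicits.
Hypothesis habs : forall t : 'I_m, nonarch_abs (absF t).
Hypotheses (pi_gt0 : forall t, 0 < absF t (pi t)) (pi_lt1 : forall t, absF t (pi t) < 1).
Hypothesis hS : forall t : 'I_m, complete_reps (absF t) (pi t) (S t).

Local Notation X := (forall t, F t).
Local Notation inO := (inObar absF).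

Definition shift (x : X) : X := fun t => digit_shift (absF t) (pi t) (S t) (x t).
Definition digits0 (x : X) : X := fun t => digit0 (absF t) (pi t) (S t) (x t).

(* [splice k w z] has the first [k] digits of [w], followed by the digits of [z]. *)
Fixpoint splice (k : nat) (w z : X) : X :=
  if k is k'.+1 then fun t => digits0 w t + pi t * splice k' (shift w) z t else z.

Lemma inObar0 : inO (fun _ => 0).
Proof. by move=> t; rewrite (abs0 (habs t)). Qed.

Lemma inObar_neg x : inO x -> inO (negO x).
Proof. by move=> x_in t; rewrite /negO (absN (habs t)). Qed.

Lemma negOK (x : X) : negO (negO x) = x.
Proof. by apply: functional_extensionality_dep => t; rewrite /negO opprK. Qed.

Lemma inObar_shift x : inO x -> inO (shift x).
Proof. by move=> x_in t; exact: (digit_shift_le1 (habs t) (pi_gt0 t) (hS t) (x_in t)). Qed.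

Lemma inObar_iter_shift k x : inO x -> inO (iter k shift x).
Proof. by move=> x_in; elim: k => //= k IHk; apply: inObar_shift. Qed.

Lemma digits0_reps x t : inO x -> S t (digits0 x t).
Proof. by move=> x_in; case: (digit0P (hS t) (x_in t)). Qed.

Lemma inObar_splice k w z : inO w -> inO z -> inO (splice k w z).
Proof.
elim: k w => // k IHk w w_in z_in t /=.
apply: (abs_le_add (habs t)); first exact: (reps_le1 (hS t) (digits0_reps t w_in) : _ <= _).
rewrite (absM (habs t)) mulr_ile1 ?abs_ge0 ?(ltW (pi_lt1 t)) //.
exact: IHk (inObar_shift w_in) z_in t.
Qed.

Lemma digits0_spliceS k w z : inO w -> inO z -> digits0 (splice k.+1 w z) = digits0 w.
Proof.
move=> w_in z_in; apply: functional_extensionality_dep => t.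
apply: digit0_expansion => //; first exact: digits0_reps.
exact: inObar_splice (inObar_shift w_in) z_in t.
Qed.

Lemma shift_spliceS k w z : inO w -> inO z -> shift (splice k.+1 w z) = splice k (shift w) z.
Proof.
move=> w_in z_in; apply: functional_extensionality_dep => t.
apply: digit_shift_expansion => //; first exact: digits0_reps.
exact: inObar_splice (inObar_shift w_in) z_in t.
Qed.

Lemma iter_shift_splice k w z : inO w -> inO z -> iter k shift (splice k w z) = z.
Proof.
elim: k w => // k IHk w w_in z_in.
by rewrite iterSr shift_spliceS // (IHk _ (inObar_shift w_in)).
Qed.

Lemma splice_iter k x : inO x -> splice k x (iter k shift x) = x.
Proof.
elim: k x => // k IHk x x_in; apply: functional_extensionality_dep => t /=.
by rewrite -iterS iterSr (IHk _ (inObar_shift x_in)) -(digit_expansion _ (habs t) (pi_gt0 t)).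
Qed.

Lemma spliceD a b w z : splice (a + b) w z = splice a w (splice b (iter a shift w) z).
Proof. by elim: a w => //= a IHa w; rewrite IHa -iterSr. Qed.

Lemma splice_splice k w z z' : inO w -> inO z ->
  splice k (splice k w z) z' = splice k w z'.
Proof.
elim: k w => // k IHk w w_in z_in; apply: functional_extensionality_dep => t /=.
by rewrite -/(splice k.+1 w z) shift_spliceS // (IHk _ (inObar_shift w_in)) // digits0_spliceS.
Qed.

Lemma splice_affine k w z t : splice k w z t = splice k w (fun _ => 0) t + pi t ^+ k * z t.
Proof. by elim: k w => [|k IHk] w /=; rewrite ?expr0 ?mul1r ?add0r // IHk exprS; ring. Qed.

Lemma abs_1subX k t : (0 < k)%N -> absF t (1 - pi t ^+ k) = 1.
Proof. by move=> k_gt0; rewrite (abs_1sub (habs t)) // (absX (habs t)) expr_lt1 // ltW. Qed.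

(* [splice k w] is affine in the tail, with slope [pi ^+ k], so its fixed
   point is obtained by solving a linear equation. *)
Definition periodize (k : nat) (w : X) : X :=
  fun t => splice k w (fun _ => 0) t / (1 - pi t ^+ k).

Lemma splice_periodize k w : (0 < k)%N -> splice k w (periodize k w) = periodize k w.
Proof.
move=> k_gt0; apply: functional_extensionality_dep => t.
have nz : 1 - pi t ^+ k != 0.
  by apply: contra_eq_neq (abs_1subX t k_gt0) => ->; rewrite (abs0 (habs t)) eq_sym oner_neq0.
by rewrite splice_affine /periodize; field.
Qed.

Lemma inObar_periodize k w : (0 < k)%N -> inO w -> inO (periodize k w).
Proof.
move=> k_gt0 w_in t; rewrite /periodize (absM (habs t)) (absV (habs t)) abs_1subX //.
by rewrite invr1 mulr1; exact: (inObar_splice k w_in inObar0 t).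
Qed.

Lemma iter_shift_periodize k w : (0 < k)%N -> inO w ->
  iter k shift (periodize k w) = periodize k w.
Proof.
move=> k_gt0 w_in; rewrite -{1}(splice_periodize w k_gt0).
by rewrite iter_shift_splice //; exact: inObar_periodize.
Qed.

(* The fixed point of [shift] whose digits are all [digit0 0]. *)
Definition fixpt : X := periodize 1 (fun _ => 0).

Lemma inObar_fixpt : inO fixpt.
Proof. exact: inObar_periodize inObar0. Qed.

Lemma iter_shift_fixpt k : iter k shift fixpt = fixpt.
Proof.
by elim: k => //= k ->; exact: (iter_shift_periodize (ltn0Sn 0) inObar0).
Qed.

Lemma shift_fixpt : shift fixpt = fixpt.
Proof. exact: (iter_shift_fixpt 1). Qed.

Lemma splice_fixpt k : splice k fixpt fixpt = fixpt.
Proof. by rewrite -{2}(iter_shift_fixpt k) splice_iter //; exact: inObar_fixpt. Qed.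

(* [eqmod n x y]: [x] and [y] share their first [n] digits. *)
Definition eqmod (n : nat) (x y : X) := forall t, absF t (x t - y t) <= absF t (pi t) ^+ n.

Lemma eqmod_le n k x y : (n <= k)%N -> eqmod k x y -> eqmod n x y.
Proof.
by move=> le_nk xy t; apply: le_trans (xy t) _; apply: ler_wiXn2l; rewrite ?ltW.
Qed.

Lemma eqmod0 x y : inO x -> inO y -> eqmod 0 x y.
Proof. by move=> x_in y_in t; rewrite expr0; exact: abs_le_sub. Qed.

Lemma eqmod_neg n x y : eqmod n x y -> eqmod n (negO x) (negO y).
Proof. by move=> xy t; rewrite /negO -opprD (absN (habs t)). Qed.

Lemma eqmod_shift n x y : inO x -> inO y -> eqmod n.+1 x y -> eqmod n (shift x) (shift y).
Proof. by move=> x_in y_in xy t; exact: digit_shift_contract. Qed.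

Lemma eqmod_spliceD n k w z z' : eqmod n z z' -> eqmod (k + n) (splice k w z) (splice k w z').
Proof.
move=> zz' t.
have -> : splice k w z t - splice k w z' t = pi t ^+ k * (z t - z' t).
  by rewrite (splice_affine k w z) (splice_affine k w z'); ring.
rewrite (absM (habs t)) (absX (habs t)) exprD.
by apply: ler_wpM2l; [exact/exprn_ge0/ltW | exact: zz'].
Qed.

Lemma eqmod_splice n k w z z' : eqmod n z z' -> eqmod n (splice k w z) (splice k w z').
Proof. by move=> zz'; apply: eqmod_le (eqmod_spliceD k w zz'); exact: leq_addl. Qed.

Lemma eqmod_splice_prefix k w z z' : inO z -> inO z' -> eqmod k (splice k w z) (splice k w z').
Proof. by move=> z_in z'_in; have := eqmod_spliceD k w (eqmod0 z_in z'_in); rewrite addn0. Qed.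

Lemma eqmod_splice_self k v z : inO v -> inO z -> eqmod k (splice k v z) v.
Proof.
move=> v_in z_in; rewrite -{2}(splice_iter k v_in).
exact: (eqmod_splice_prefix k v z_in (inObar_iter_shift k v_in)).
Qed.

Lemma pi_exprn_small d : 0 < d -> exists N, forall t, absF t (pi t) ^+ N < d.
Proof.
move=> d_gt0.
have /fin_all_exists [N_ N_P] : forall t, exists N, forall n, (N <= n)%N -> absF t (pi t) ^+ n < d.
  by move=> t; apply: exprn_eventually_lt; rewrite ?ltW.
by exists (\max_t N_ t) => t; apply: N_P; exact: leq_bigmax.
Qed.

Lemma prod_pi_le t : \prod_s absF s (pi s) <= absF t (pi t).
Proof.
rewrite (bigD1 t) //= ler_piMr ?(ltW (pi_gt0 t)) //.
by apply: prodr_ile1 => s _; rewrite (ltW (pi_gt0 s)) (ltW (pi_lt1 s)).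
Qed.

Definition nshift (x : X) : X := negO (shift (negO x)).

Lemma inObar_nshift x : inO x -> inO (nshift x).
Proof. by move=> x_in; apply/inObar_neg/inObar_shift/inObar_neg. Qed.

Section Continuity.
Variables (K : fieldType) (absK : K -> R).
Hypothesis habsK : nonarch_abs absK.
Hypothesis absK_complete : forall u, abs_cauchy absK u -> abs_converges absK u.

Definition approx_cont (h : X -> K) (v : X) := forall eps, 0 < eps -> eps < 1 ->
  exists N, forall z, inO z -> eqmod N z v -> approx absK eps (h z) (h v).

Lemma approx_cont_of_cont h v : contObar absF absK h -> inO v -> h v != 0 -> approx_cont h v.
Proof.
move=> h_cont v_in hv_neq0 eps eps_gt0 eps_lt1.
have hv_gt0 : 0 < eps * absK (h v) by rewrite mulr_gt0 // abs_gt0.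
have [d d_gt0 hd] := h_cont v v_in _ hv_gt0.
have [N piN_lt] := pi_exprn_small d_gt0.
exists N => z z_in zv; apply/ltW/hd => // t.
exact: le_lt_trans (zv t) (piN_lt t).
Qed.

Lemma cont_of_approx_cont h : (forall v, inO v -> approx_cont h v) -> contObar absF absK h.
Proof.
move=> h_cont v v_in eps eps_gt0.
pose c := absK (h v); have c_ge0 : 0 <= c by exact: abs_ge0.
pose e := Num.min (1/2) (eps / (c + 1)).
have e_gt0 : 0 < e by rewrite lt_min; apply/andP; split; [lra | rewrite divr_gt0 //; lra].
have e_lt1 : e < 1 by rewrite gt_min; apply/orP; left; lra.
have e_le : e <= eps / (c + 1) by rewrite ge_min lexx orbT.
have [N hN] := h_cont v v_in e e_gt0 e_lt1.
exists ((\prod_t absF t (pi t)) ^+ N); first by apply/exprn_gt0/prodr_gt0.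
have prod_ge0 : 0 <= \prod_t absF t (pi t) by apply: prodr_ge0 => t _; exact: ltW.
move=> y y_in yv; apply: le_lt_trans (hN y y_in _) _.
  move=> t; apply/ltW/(lt_le_trans (yv t)).
  by apply: lerXn2r; rewrite ?nnegrE ?prod_ge0 ?(ltW (pi_gt0 t)) ?prod_pi_le.
have c1_neq0 : c + 1 != 0 by rewrite gt_eqF //; lra.
have q : eps / (c + 1) * c = eps - eps / (c + 1) by field.
have : 0 < eps / (c + 1) by rewrite divr_gt0 //; lra.
have : e * c <= eps / (c + 1) * c by exact: ler_wpM2r.
rewrite -/c; lra.
Qed.

Lemma approx_contM (a b : X -> K) v :
  approx_cont a v -> approx_cont b v -> approx_cont (fun z => a z * b z) v.
Proof.
move=> a_cont b_cont eps eps_gt0 eps_lt1.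
have [Na hNa] := a_cont eps eps_gt0 eps_lt1; have [Nb hNb] := b_cont eps eps_gt0 eps_lt1.
exists (maxn Na Nb) => z z_in zv /=; apply: (approxM habsK eps_lt1).
  by apply: hNa => //; apply: eqmod_le zv; exact: leq_maxl.
by apply: hNb => //; apply: eqmod_le zv; exact: leq_maxr.
Qed.

Lemma approx_contV (a : X -> K) v : approx_cont a v -> approx_cont (fun z => (a z)^-1) v.
Proof.
move=> a_cont eps eps_gt0 eps_lt1; have [N hN] := a_cont eps eps_gt0 eps_lt1.
by exists N => z z_in zv; exact: (approxV habsK (ltW eps_gt0) eps_lt1 (hN z z_in zv)).
Qed.

Lemma approx_cont_negO (a : X -> K) v :
  approx_cont a (negO v) -> approx_cont (fun z => a (negO z)) v.
Proof.
move=> a_cont eps eps_gt0 eps_lt1; have [N hN] := a_cont eps eps_gt0 eps_lt1.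
by exists N => z z_in zv; apply: hN; [exact: inObar_neg | exact: eqmod_neg].
Qed.

Lemma approx_cont_nshift (a : X -> K) v : inO v ->
  approx_cont a (nshift v) -> approx_cont (fun z => a (nshift z)) v.
Proof.
move=> v_in a_cont eps eps_gt0 eps_lt1; have [N hN] := a_cont eps eps_gt0 eps_lt1.
exists N.+1 => z z_in zv; apply: hN; first exact: inObar_nshift.
apply/eqmod_neg/(eqmod_shift (inObar_neg z_in) (inObar_neg v_in)).
exact: eqmod_neg.
Qed.

Lemma eq_approx_cont (a b : X -> K) v : (forall z, inO z -> a z = b z) -> inO v ->
  approx_cont a v -> approx_cont b v.
Proof.
move=> ab v_in a_cont eps eps_gt0 eps_lt1; have [N hN] := a_cont eps eps_gt0 eps_lt1.
by exists N => z z_in zv; rewrite -!ab //; apply: hN.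
Qed.

Section Livsic.
Variable f : X -> K.
Hypothesis f_cont : forall v, inO v -> approx_cont f v.
Hypothesis f_neq0 : forall v, inO v -> f v != 0.
Hypothesis f_periodic : forall n x, inO x -> iter n shift x = x ->
  \prod_(j < n) f (iter j shift x) = 1.

Definition bprod n x := \prod_(j < n) f (iter j shift x).

Lemma bprodS n x : bprod n.+1 x = f x * bprod n (shift x).
Proof. by rewrite /bprod big_ord_recl; congr (_ * _); apply: eq_bigr => j _; rewrite iterSr. Qed.

Lemma bprodD a b x : bprod (a + b) x = bprod a x * bprod b (iter a shift x).
Proof.
elim: a x => [|a IHa] x; first by rewrite /bprod big_ord0 mul1r.
by rewrite addSn !bprodS IHa mulrA iterSr.
Qed.

Lemma bprod_neq0 n x : inO x -> bprod n x != 0.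
Proof. by move=> x_in; apply/prodf_neq0 => j _; apply/f_neq0/inObar_iter_shift. Qed.

Lemma f_fixpt : f fixpt = 1.
Proof.
have := f_periodic inObar_fixpt (iter_shift_fixpt 1).
by rewrite big_ord_recl big_ord0 mulr1.
Qed.

Definition backward_prod L z := bprod L (splice L fixpt z).

Lemma backward_prodS L z : inO z ->
  backward_prod L.+1 z = f (splice L.+1 fixpt z) * backward_prod L z.
Proof.
by move=> z_in; rewrite /backward_prod bprodS shift_spliceS ?shift_fixpt //; exact: inObar_fixpt.
Qed.

Lemma backward_prod_neq0 L z : inO z -> backward_prod L z != 0.
Proof. by move=> z_in; apply/bprod_neq0/inObar_splice => //; exact: inObar_fixpt. Qed.

Section Eps.
Variable eps : R.
Hypotheses (eps_gt0 : 0 < eps) (eps_lt1 : eps < 1).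

Lemma f_splice_fixpt_near1 : exists N, forall z r, inO z -> (N <= r)%N ->
  approx absK eps (f (splice r fixpt z)) 1.
Proof.
have [N hN] := f_cont inObar_fixpt eps_gt0 eps_lt1.
exists N => z r z_in le_Nr; rewrite -f_fixpt; apply: hN.
  by apply: inObar_splice z_in; exact: inObar_fixpt.
apply: eqmod_le le_Nr _; rewrite -{2}(splice_fixpt r).
exact: (eqmod_splice_prefix r fixpt z_in inObar_fixpt).
Qed.

Lemma f_splice_fixpt_cont v : inO v -> exists N, forall z, inO z -> eqmod N z v ->
  forall r, approx absK eps (f (splice r fixpt z)) (f (splice r fixpt v)).
Proof.
move=> v_in; have [N0 hN0] := f_splice_fixpt_near1.
have /fin_all_exists [N_ hN_] : forall r : 'I_N0, exists N, forall x, inO x ->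
    eqmod N x (splice r fixpt v) -> approx absK eps (f x) (f (splice r fixpt v)).
  by move=> r; apply: f_cont => //; apply: inObar_splice v_in; exact: inObar_fixpt.
exists (\max_r N_ r) => z z_in zv r.
have [lt_rN0 | le_N0r] := ltnP r N0.
  apply: (hN_ (Ordinal lt_rN0)); first by apply: inObar_splice z_in; exact: inObar_fixpt.
  by apply/eqmod_splice/(eqmod_le _ zv); exact: (leq_bigmax (Ordinal lt_rN0)).
apply: (approx_trans habsK eps_lt1 (hN0 z r z_in le_N0r)).
exact/(approx_sym habsK eps_lt1)/hN0.
Qed.

Lemma backward_prod_cont v : inO v -> exists N, forall z, inO z -> eqmod N z v ->
  forall L, approx absK eps (backward_prod L z) (backward_prod L v).
Proof.
move=> v_in; have [N hN] := f_splice_fixpt_cont v_in.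
exists N => z z_in zv; elim=> [|L IHL].
  by rewrite /backward_prod /bprod !big_ord0; exact/approx_refl/ltW.
by rewrite !backward_prodS //; apply: (approxM habsK eps_lt1) => //; exact: hN.
Qed.

Lemma backward_prod_cauchy : exists N, forall z L L', inO z -> (N <= L)%N -> (N <= L')%N ->
  approx absK eps (backward_prod L z) (backward_prod L' z).
Proof.
have [N hN] := f_splice_fixpt_near1.
have near_N z k : inO z -> approx absK eps (backward_prod (N + k) z) (backward_prod N z).
  move=> z_in; elim: k => [|k IHk]; first by rewrite addn0; exact/approx_refl/ltW.
  rewrite addnS backward_prodS // -[backward_prod N z]mul1r.
  by apply: (approxM habsK eps_lt1) => //; apply: hN => //; rewrite -addnS leq_addr.
exists N => z L L' z_in le_NL le_NL'; rewrite -(subnKC le_NL) -(subnKC le_NL').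
exact/(approx_trans habsK eps_lt1 (near_N z _ z_in))/(approx_sym habsK eps_lt1)/near_N.
Qed.

Lemma bprod_splice_cont M w v : inO w -> inO v -> exists N, forall z, inO z -> eqmod N z v ->
  approx absK eps (bprod M (splice M w z)) (bprod M (splice M w v)).
Proof.
move=> + v_in; elim: M w => [|M IHM] w w_in.
  by exists 0%N => z _ _; rewrite /bprod !big_ord0; exact/approx_refl/ltW.
have [N1 hN1] := f_cont (inObar_splice M.+1 w_in v_in) eps_gt0 eps_lt1.
have [N2 hN2] := IHM _ (inObar_shift w_in).
exists (maxn N1 N2) => z z_in zv; rewrite !bprodS !shift_spliceS //.
apply: (approxM habsK eps_lt1); last by apply: hN2 => //; apply: eqmod_le zv; exact: leq_maxr.
apply: hN1; first exact: inObar_splice.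
by apply/eqmod_splice/(eqmod_le _ zv); exact: leq_maxl.
Qed.

End Eps.

(* [livsic_sol z = \prod_(j >= 1) f (splice j fixpt z)]. *)
Definition livsic_sol z := abs_lim absK (backward_prod ^~ z).

Lemma livsic_sol_approx z eps : inO z -> 0 < eps -> eps < 1 ->
  exists N, forall L, (N <= L)%N -> approx absK eps (livsic_sol z) (backward_prod L z).
Proof.
move=> z_in; apply: approx_abs_lim => // [L | e e_gt0 e_lt1].
  exact: backward_prod_neq0.
by have [N hN] := backward_prod_cauchy e_gt0 e_lt1; exists N => L L'; exact: hN.
Qed.

Lemma livsic_sol_neq0 z : inO z -> livsic_sol z != 0.
Proof.
move=> z_in; have half_gt0 : 0 < 1/2 :> R by lra.
have half_lt1 : 1/2 < 1 :> R by lra.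
have [N hN] := livsic_sol_approx z_in half_gt0 half_lt1.
by apply: (approx_neq0 habsK half_lt1 (hN N (leqnn N))); exact: backward_prod_neq0.
Qed.

Lemma livsic_sol_cont v : inO v -> approx_cont livsic_sol v.
Proof.
move=> v_in eps eps_gt0 eps_lt1; have [N hN] := backward_prod_cont eps_gt0 eps_lt1 v_in.
exists N => z z_in zv.
have [Lz hLz] := livsic_sol_approx z_in eps_gt0 eps_lt1.
have [Lv hLv] := livsic_sol_approx v_in eps_gt0 eps_lt1.
apply: (approx_trans habsK eps_lt1 (hLz _ (leq_maxl Lz Lv))).
apply: (approx_trans habsK eps_lt1 (hN z z_in zv _)).
exact/(approx_sym habsK eps_lt1)/hLv/leq_maxr.
Qed.

(* [P] is periodic of period [L + M]: [L] digits of [fixpt], then [M] digits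
   of [v]; the identity is [f_periodic] along its orbit. *)
Lemma exists_periodic_splice L M v : (0 < L + M)%N -> inO v -> exists P, [/\ inO P,
  eqmod L P fixpt & backward_prod L (splice M v P) * bprod M (splice M v P) = 1].
Proof.
move=> LM_gt0 v_in; have fixpt_in := inObar_fixpt.
pose w := splice L fixpt v; pose P := periodize (L + M) w.
have w_in : inO w by exact: inObar_splice.
have P_in : inO P by exact: inObar_periodize.
have u_in : inO (splice M v P) by exact: inObar_splice.
have P_eq : P = splice L fixpt (splice M v P).
  rewrite {1}/P -(splice_periodize w LM_gt0) -/P spliceD iter_shift_splice //.
  by rewrite splice_splice.
exists P; split => //.
  by rewrite P_eq -{2}(splice_fixpt L); exact: eqmod_splice_prefix.
have := f_periodic P_in (iter_shift_periodize LM_gt0 w_in); rewrite -/(bprod _ P) -/P bprodD.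
have iterP : iter L shift P = splice M v P by rewrite {1}P_eq iter_shift_splice.
by rewrite iterP /backward_prod -P_eq.
Qed.

Lemma livsic_sol_approx_periodic v eps : inO v -> 0 < eps -> eps < 1 ->
  exists N, forall M L P, (N <= M)%N -> (N <= L)%N -> inO P ->
    backward_prod L (splice M v P) * bprod M (splice M v P) = 1 ->
    approx absK eps (livsic_sol v) (bprod M (splice M v P))^-1.
Proof.
move=> v_in eps_gt0 eps_lt1.
have [N1 hN1] := backward_prod_cont eps_gt0 eps_lt1 v_in.
have [N2 hN2] := livsic_sol_approx v_in eps_gt0 eps_lt1.
exists (maxn N1 N2) => M L P; rewrite !geq_max => /andP[le_N1M _] /andP[_ le_N2L] P_in prodP.
have u_in : inO (splice M v P) by exact: inObar_splice.
have -> : (bprod M (splice M v P))^-1 = backward_prod L (splice M v P).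
  by apply: (mulIf (bprod_neq0 M u_in)); rewrite prodP mulVf // bprod_neq0.
apply: (approx_trans habsK eps_lt1 (hN2 L le_N2L)).
exact/(approx_sym habsK eps_lt1)/hN1/(eqmod_le le_N1M (eqmod_splice_self M v_in P_in)).
Qed.

Lemma livsic_solP y : inO y -> livsic_sol (shift y) = f y * livsic_sol y.
Proof.
move=> y_in; apply: (approx_eq habsK) => eps eps_gt0 eps_lt1.
have fixpt_in := inObar_fixpt; have sy_in := inObar_shift y_in.
have [N1 hN1] := livsic_sol_approx_periodic sy_in eps_gt0 eps_lt1.
have [N2 hN2] := livsic_sol_approx_periodic y_in eps_gt0 eps_lt1.
have [N3 hN3] := f_cont y_in eps_gt0 eps_lt1.
pose M := (maxn N1 (maxn N2 N3)).+1.
have [N4 hN4] := bprod_splice_cont eps_gt0 eps_lt1 M sy_in fixpt_in.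
pose L := maxn N4 M.
have [le_N1M le_N2M le_N3M] : [/\ N1 <= M, N2 <= M & N3 <= M]%N.
  by rewrite !leqW // ?leq_maxl // (leq_trans _ (leq_maxr _ _)) ?leq_maxl ?leq_maxr.
have [le_N4L le_ML] : (N4 <= L)%N /\ (M <= L)%N by rewrite leq_maxl leq_maxr.
have [P1 [P1_in P1_fix prod1]] := @exists_periodic_splice L M _ (ltn_addl L (ltn0Sn _)) sy_in.
have [P2 [P2_in P2_fix prod2]] := @exists_periodic_splice L M.+1 _ (ltn_addl L (ltn0Sn M)) y_in.
have B1 := hN1 M L P1 le_N1M (leq_trans le_N1M le_ML) P1_in prod1.
have B2 := hN2 M.+1 L P2 (leqW le_N2M) (leq_trans le_N2M le_ML) P2_in prod2.
pose u2 := splice M.+1 y P2; have u2_in : inO u2 by exact: inObar_splice.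
rewrite bprodS shift_spliceS // -/u2 in B2.
set B := bprod M (splice M (shift y) P2) in B2 *.
have B_neq0 : B != 0 by apply/bprod_neq0/inObar_splice.
have fu2_neq0 := f_neq0 u2_in.
have P1P2 : approx absK eps (bprod M (splice M (shift y) P1)) B.
  apply: (approx_trans habsK eps_lt1 (hN4 P1 P1_in (eqmod_le le_N4L P1_fix))).
  exact/(approx_sym habsK eps_lt1)/hN4/(eqmod_le le_N4L P2_fix).
have u2y : approx absK eps (f u2) (f y).
  exact/hN3/(eqmod_le (leqW le_N3M) (eqmod_splice_self M.+1 y_in P2_in)).
apply: (approx_trans habsK eps_lt1 B1).
apply: (approx_trans habsK eps_lt1 (approxV habsK (ltW eps_gt0) eps_lt1 P1P2)).
have -> : B^-1 = f u2 * (f u2 * B)^-1 by field; rewrite fu2_neq0 B_neq0.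
exact: (approxM habsK eps_lt1 u2y (approx_sym habsK eps_lt1 B2)).
Qed.

End Livsic.
Lemma approx_cont_nonvanishing h v : contObar absF absK h -> nonvanishingObar absF h ->
  inO v -> approx_cont h v.
Proof. by move=> h_cont h_nv v_in; apply: approx_cont_of_cont => //; exact/eqP/h_nv. Qed.

Section Coboundary.
Variables Gam H : X -> K.
Hypotheses (Gam_cont : contObar absF absK Gam) (Gam_nv : nonvanishingObar absF Gam).

Lemma coboundary_of_periodic_prod :
  contObar absF absK H -> nonvanishingObar absF H ->
  (forall n x, inO x -> iter n shift (negO x) = negO x ->
     \prod_(j < n) Gam (negO (iter j shift (negO x))) =
     \prod_(j < n) H (negO (iter j shift (negO x)))) ->
  exists G, [/\ contObar absF absK G, nonvanishingObar absF G &
    forall x, inO x -> H x = Gam x * (G x / G (nshift x))].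
Proof.
move=> H_cont H_nv H_periodic.
pose f z := H (negO z) / Gam (negO z).
have f_cont v : inO v -> approx_cont f v.
  move=> v_in; have nv_in := inObar_neg v_in.
  apply: (approx_contM (a := fun z => H (negO z)) (b := fun z => (Gam (negO z))^-1)).
    exact/approx_cont_negO/approx_cont_nonvanishing.
  exact/(approx_contV (a := fun z => Gam (negO z)))/approx_cont_negO/approx_cont_nonvanishing.
have f_neq0 v : inO v -> f v != 0.
  move=> /inObar_neg v_in; rewrite mulf_neq0 ?invr_eq0 //; apply/eqP.
    exact: H_nv.
  exact: Gam_nv.
have f_periodic n x : inO x -> iter n shift x = x -> \prod_(j < n) f (iter j shift x) = 1.
  move=> x_in x_per; have := H_periodic n _ (inObar_neg x_in); rewrite negOK => /(_ x_per) per.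
  rewrite prodf_div -per divff //.
  by apply/prodf_neq0 => j _; apply/eqP/Gam_nv/inObar_neg/inObar_iter_shift.
pose sol := livsic_sol f.
exists (fun x => (sol (negO x))^-1); split.
- apply: cont_of_approx_cont => v v_in.
  apply/(approx_contV (a := fun x => sol (negO x)))/approx_cont_negO.
  exact: (livsic_sol_cont f_cont f_neq0 f_periodic (inObar_neg v_in)).
- move=> x x_in; apply/eqP; rewrite invr_eq0.
  exact: (livsic_sol_neq0 f_cont f_neq0 f_periodic (inObar_neg x_in)).
move=> x x_in; have nx_in := inObar_neg x_in.
have sol_neq0 := livsic_sol_neq0 f_cont f_neq0 f_periodic nx_in.
have /eqP Gam_neq0 := Gam_nv x_in; have /eqP H_neq0 := H_nv x x_in.
rewrite /nshift negOK /sol (livsic_solP f_cont f_neq0 f_periodic nx_in) /f negOK.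
by field; rewrite Gam_neq0 sol_neq0 H_neq0.
Qed.

Lemma periodic_prod_of_coboundary G : contObar absF absK G -> nonvanishingObar absF G ->
  (forall x, inO x -> H x = Gam x * (G x / G (nshift x))) ->
  [/\ contObar absF absK H, nonvanishingObar absF H &
    forall n x, inO x -> iter n shift (negO x) = negO x ->
      \prod_(j < n) Gam (negO (iter j shift (negO x))) =
      \prod_(j < n) H (negO (iter j shift (negO x)))].
Proof.
move=> G_cont G_nv HE; split.
- apply: cont_of_approx_cont => v v_in.
  apply: (eq_approx_cont (a := fun z => Gam z * (G z / G (nshift z)))) => // [z z_in|].
    by rewrite HE.
  apply: approx_contM; first exact: approx_cont_nonvanishing.
  apply: approx_contM; first exact: approx_cont_nonvanishing.
  apply/(approx_contV (a := fun z => G (nshift z)))/approx_cont_nshift => //.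
  exact/approx_cont_nonvanishing/inObar_nshift.
- move=> x x_in; apply/eqP; rewrite HE // !mulf_neq0 ?invr_eq0 //; apply/eqP.
  + exact: Gam_nv.
  + exact: G_nv.
  + exact/G_nv/inObar_nshift.
move=> n x x_in x_per; pose y j := negO (iter j shift (negO x)).
have y_in j : inO (y j) by apply/inObar_neg/inObar_iter_shift/inObar_neg.
have yS j : nshift (y j) = y j.+1 by rewrite /nshift /y negOK.
change (\prod_(j < n) Gam (y j) = \prod_(j < n) H (y j)).
under [RHS]eq_bigr => j _ do rewrite HE // yS.
rewrite big_split prodf_div /= (prod_cyclic_shift (g := G \o y)) /=; last by rewrite /y x_per.
rewrite divff ?mulr1 //; apply/prodf_neq0 => j _; exact/eqP/G_nv.
Qed.

End Coboundary.
End Continuity.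

End DigitShift.

Unset Implicit Arguments.

Theorem mainTheorem2 (R : realType) (m : nat) (F : 'I_m -> fieldType)
  (absF : forall t, F t -> R)
  (hF : forall t, nonarch_local_field (absF t))
  (varpi : forall t, F t) (hvarpi : forall t, uniformizer (absF t) (varpi t))
  (e : 'I_m -> nat) (he : forall t, (0 < e t)%N)
  (S : forall t, F t -> Prop)
  (hS : forall t, complete_reps (absF t) (varpi t ^+ e t) (S t))
  (K : fieldType) (absK : K -> R) (hK : complete_nonarch_field absK)
  (Gam : (forall t, F t) -> K)
  (hGam_cont : contObar absF absK Gam)
  (hGam_nv : nonvanishingObar absF Gam)
  (H : (forall t, F t) -> K) :
  let phi := varphi absF varpi e S in
  (contObar absF absK H /\ nonvanishingObar absF H /\
   forall (n : nat) (x : forall t, F t), inObar absF x ->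
     iter n phi (negO x) = negO x ->
     \prod_(j < n) Gam (negO (iter j phi (negO x))) =
     \prod_(j < n) H (negO (iter j phi (negO x))))
  <->
  (exists G : (forall t, F t) -> K,
     contObar absF absK G /\ nonvanishingObar absF G /\
     forall x, inObar absF x ->
       H x = Gam x * (G x / G (negO (phi (negO x))))).
Proof.
move=> phi; have [habsK absK_complete] := hK.
have habs t : nonarch_abs (absF t) by case: (hF t) => [[]].
have pi_gt0 t : 0 < absF t (varpi t ^+ e t).
  by rewrite (absX (habs t)) exprn_gt0 //; case/andP: (hvarpi t).1.
have pi_lt1 t : absF t (varpi t ^+ e t) < 1.
  by rewrite (absX (habs t)) expr_lt1 //; case/andP: (hvarpi t).1 => /ltW.
split=> [[H_cont [H_nv H_periodic]] | [G [G_cont [G_nv HE]]]].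
  have [G [G_cont G_nv HE]] := coboundary_of_periodic_prod habs pi_gt0 pi_lt1 hS habsK
    absK_complete hGam_cont hGam_nv H_cont H_nv H_periodic.
  by exists G.
by have [] := periodic_prod_of_coboundary habs pi_gt0 pi_lt1 hS habsK hGam_cont hGam_nv
  G_cont G_nv HE.
Qed.
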